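(* Let $q$ be a root of unity with $q^4\neq1$, let $\sigma\in\mathbb C^\times$ be general, $w\in\mathbb C$, and $(\vec s,\vec t)\in E^0_{\sigma,w}$. Let $V$ have basis $\{v_i:i\in\mathbb Z/D\}$. Then $\rho(\alpha_0)v_i=\lambda_iv_i$, $\rho(\alpha_1)v_i=q^{2i+1}\sigma s_iv_{i+1}+q^{-2i+1}\sigma^{-1}t_{i-1}v_{i-1}$, $\rho(\alpha_\infty)v_i=s_iv_{i+1}+t_{i-1}v_{i-1}$ define a representation $\rho:\mathcal S_q(\Sigma_{1,1})\to\mathrm{End}(V)$, and moreover $\rho(A_0)=z_0\,\mathrm{id}_V$ and $\rho(p)=w\,\mathrm{id}_V$.
   Context: $\mathcal S_q(\Sigma_{1,1})$ is the Kauffman bracket skein algebra of the one-punctured torus (framed links in $\Sigma_{1,1}\times(-1,1)$ modulo the Kauffman bracket relation and trivial loop $=-q^2-q^{-2}$). It is generated by the slope $0,1,\infty$ curves $\alpha_0,\alpha_1,\alpha_\infty$ subject to $q\alpha_0\alpha_\infty-q^{-1}\alpha_\infty\alpha_0=(q^2-q^{-2})\alpha_1$, $q\alpha_1\alpha_0-q^{-1}\alpha_0\alpha_1=(q^2-q^{-2})\alpha_\infty$, $q\alpha_\infty\alpha_1-q^{-1}\alpha_1\alpha_\infty=(q^2-q^{-2})\alpha_0$; the peripheral curve is $p=q\alpha_0\alpha_\infty\alpha_1-q^2\alpha_0^2-q^2\alpha_1^2-q^{-2}\alpha_\infty^2+q^2+q^{-2}$. For $q$ a root of unity, $n=\mathrm{ord}(q^2)$,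 $D=n$, $T_D$ is the Chebyshev polynomial with $T_D(t+t^{-1})=t^D+t^{-D}$, and $A_0=T_D(\alpha_0)$. For $\sigma\in\mathbb C^\times$ set $z_0=\sigma^D+\sigma^{-D}$, $\lambda_i=q^{2i}\sigma+q^{-2i}\sigma^{-1}$, $\hat\lambda_i=q^{2i}\sigma-q^{-2i}\sigma^{-1}$ ($i\in\mathbb Z/D$). $\sigma$ is general if $z_0\neq\pm2$, or $z_0=-2$ and $n$ is even (equivalently, all $\hat\lambda_i\neq0$). For general $\sigma$ and $w\in\mathbb C$: $r_i(\sigma,w)=\dfrac{w+q^{4i+2}\sigma^2+q^{-4i-2}\sigma^{-2}}{\hat\lambda_i\hat\lambda_{i+1}}$ and $E^0_{\sigma,w}=\{(s_1,\dots,s_D,t_1,\dots,t_D)\in\mathbb C^{2D}: s_it_i=r_i(\sigma,w)\ \forall i\}$ (indices mod $D$). *)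

From HB Require Import structures.
From mathcomp Require Import all_boot all_order all_algebra.
From mathcomp Require Import reals complex.
Set Implicit Arguments. Unset Strict Implicit. Unset Printing Implicit Defensive.
Import Order.TTheory GRing.Theory Num.Theory.
Local Open Scope ring_scope.

Section SkeinDefs.
Variable C : fieldType.

(* Chebyshev polynomial T_k evaluated at a square matrix:
   T_0 = 2, T_1 = x, T_{k+2} = x T_{k+1} - T_k,
   so that T_k(t + t^-1) = t^k + t^-k. *)
Fixpoint cheb_aux (m : nat) (A : 'M[C]_m) (k : nat) : 'M[C]_m * 'M[C]_m :=
  match k with
  | 0 => (2%:M, A)
  | k'.+1 => let: (a, b) := cheb_aux A k' in (b, A *m b - a)
  end.
Definition chebT (m : nat) (A : 'M[C]_m) (k : nat) : 'M[C]_m := (cheb_aux A k).1.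

(* The defining relations of S_q(Sigma_{1,1}) in the generators
   alpha_0, alpha_1, alpha_infty.  An assignment of matrices (endomorphisms of
   C^m, acting on column vectors) to the generators extends to an algebra map
   rho : S_q(Sigma_{1,1}) -> End(C^m) iff these relations hold. *)
Definition skein_rep (q : C) (m : nat) (a0 a1 ainf : 'M[C]_m) : Prop :=
  [/\ q *: (a0 *m ainf) - q^-1 *: (ainf *m a0) = (q ^+ 2 - q ^- 2) *: a1,
      q *: (a1 *m a0) - q^-1 *: (a0 *m a1) = (q ^+ 2 - q ^- 2) *: ainf &
      q *: (ainf *m a1) - q^-1 *: (a1 *m ainf) = (q ^+ 2 - q ^- 2) *: a0].

Definition periph_mx (q : C) (m : nat) (a0 a1 ainf : 'M[C]_m) : 'M[C]_m :=
  q *: (a0 *m ainf *m a1) - q ^+ 2 *: (a0 *m a0) - q ^+ 2 *: (a1 *m a1)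
  - q ^- 2 *: (ainf *m ainf) + (q ^+ 2 + q ^- 2)%:M.

(* Data attached to sigma, indices i in Z/D represented by 'I_D. *)
Definition z0 (D : nat) (sigma : C) : C := sigma ^+ D + sigma ^- D.
Definition lam (q sigma : C) (i : nat) : C := q ^+ (2 * i) * sigma + (q ^+ (2 * i))^-1 * sigma^-1.
Definition lamh (q sigma : C) (i : nat) : C := q ^+ (2 * i) * sigma - (q ^+ (2 * i))^-1 * sigma^-1.

Definition general_sigma (n : nat) (sigma : C) : Prop :=
  sigma != 0 /\
  ((z0 n sigma != 2 /\ z0 n sigma != -2) \/ (z0 n sigma = -2 /\ ~~ odd n)).

Definition r_coef (q sigma w : C) (D : nat) (i : 'I_D) : C :=
  (w + q ^+ (4 * i + 2) * sigma ^+ 2 + (q ^+ (4 * i + 2))^-1 * sigma ^- 2)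
  / (lamh q sigma i * lamh q sigma (ordS i)).

Definition in_E0 (q sigma w : C) (D : nat) (s t : 'I_D -> C) : Prop :=
  forall i : 'I_D, s i * t i = r_coef q sigma w i.

(* Matrices of rho(alpha_0), rho(alpha_1), rho(alpha_infty) in the basis v_i:
   entry (j, i) is the coefficient of v_j in rho(.) v_i. *)
Definition rho0 (q sigma : C) (D : nat) : 'M[C]_D :=
  \matrix_(j, i) ((j == i)%:R * lam q sigma i).
Definition rho1 (q sigma : C) (D : nat) (s t : 'I_D -> C) : 'M[C]_D :=
  \matrix_(j, i) ((j == ordS i)%:R * (q ^+ (2 * i + 1) * sigma * s i)
                 + (j == ord_pred i)%:R * (q * (q ^+ (2 * i))^-1 * sigma^-1 * t (ord_pred i))).
Definition rhoinf (D : nat) (s t : 'I_D -> C) : 'M[C]_D :=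
  \matrix_(j, i) ((j == ordS i)%:R * s i + (j == ord_pred i)%:R * t (ord_pred i)).

End SkeinDefs.

From HB Require Import structures.
From mathcomp Require Import all_boot all_order all_algebra.
From mathcomp Require Import reals complex.
From mathcomp Require Import ring.
Import Order.TTheory GRing.Theory Num.Theory.
Local Open Scope ring_scope.

(* Put x_i = q^(2i) sigma, so that x_(i+-1) = q^(+-2) x_i, indices being read
   mod D because q^(2D) = 1.  Then rho(alpha_0) is diagonal with entries
   x_i + x_i^-1, while rho(alpha_1) and rho(alpha_infty) shift i by +-1; the
   first two skein relations hold entrywise for arbitrary s, t.  In the third
   relation and in rho(p) the diagonal entries also involve s_i t_i and
   s_(i-1) t_(i-1), and their defect is a combination of s_i t_i - r_i and
   s_(i-1) t_(i-1) - r_(i-1), which vanish on E^0.  Generality of sigma says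
   exactly that x_i^2 <> 1, i.e. that no hat-lambda_i vanishes.  Finally T_D acts on
   the diagonal as x_i + x_i^-1 |-> x_i^D + x_i^-D = sigma^D + sigma^-D. *)

Lemma sum_mul_delta (R : pzSemiRingType) D (f : 'I_D -> R) (a : 'I_D) (x : R) :
  \sum_k f k * ((k == a)%:R * x) = f a * x.
Proof.
rewrite (bigD1 a) //= eqxx mul1r big1 ?addr0 // => k /negbTE ->.
by rewrite mul0r mulr0.
Qed.

Lemma sum_mul_delta2 (R : pzSemiRingType) D (f : 'I_D -> R) (a b : 'I_D) (x y : R) :
  \sum_k f k * ((k == a)%:R * x + (k == b)%:R * y) = f a * x + f b * y.
Proof. by under eq_bigr do rewrite mulrDr; rewrite big_split !sum_mul_delta. Qed.

Lemma expr_ordS (R : pzSemiRingType) D (x : R) (i : 'I_D) :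
  x ^+ D = 1 -> x ^+ ordS i = x ^+ i * x.
Proof. by move=> xD; rewrite -exprSr /= (expr_mod _ xD). Qed.

Lemma expr_ord_pred (F : fieldType) D (x : F) (i : 'I_D) :
  x ^+ D = 1 -> x ^+ ord_pred i = x ^+ i / x.
Proof.
move=> xD; have x0 : x != 0.
  apply: contra_eq_neq xD => ->; rewrite expr0n.
  by case: D i => [[]|n] // _; rewrite eq_sym oner_neq0.
by rewrite -[in RHS](ord_predK i) expr_ordS // mulfK.
Qed.

Lemma expr_q2k_sigma (R : comPzSemiRingType) (q sigma : R) D k :
  (q ^+ 2) ^+ D = 1 -> (q ^+ (2 * k) * sigma) ^+ D = sigma ^+ D.
Proof. by move=> qD; rewrite exprMn exprM exprAC qD expr1n mul1r. Qed.

Section RhoMatrices.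
Variables (F : fieldType) (q sigma : F) (D : nat) (s t : 'I_D -> F).

Lemma sum_mul_rho0 (f : 'I_D -> F) i :
  \sum_k f k * rho0 q sigma D k i = f i * lam q sigma i.
Proof. by under eq_bigr do rewrite mxE; rewrite sum_mul_delta. Qed.

Lemma sum_mul_rho1 (f : 'I_D -> F) i :
  \sum_k f k * rho1 q sigma s t k i = f (ordS i) * (q ^+ (2 * i + 1) * sigma * s i)
    + f (ord_pred i) * (q * (q ^+ (2 * i))^-1 * sigma^-1 * t (ord_pred i)).
Proof. by under eq_bigr do rewrite mxE; rewrite sum_mul_delta2. Qed.

Lemma sum_mul_rhoinf (f : 'I_D -> F) i :
  \sum_k f k * rhoinf s t k i = f (ordS i) * s i + f (ord_pred i) * t (ord_pred i).
Proof. by under eq_bigr do rewrite mxE; rewrite sum_mul_delta2. Qed.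

Lemma exp4q_add2 k : q ^+ (4 * k + 2) = (q ^+ (2 * k)) ^+ 2 * q ^+ 2.
Proof. by rewrite exprD -exprM [(2 * k * 2)%N]mulnC mulnA. Qed.

Hypotheses (qD : (q ^+ 2) ^+ D = 1) (q0 : q != 0) (sigma0 : sigma != 0).

Lemma exp2q_ordS (i : 'I_D) : q ^+ (2 * ordS i) = q ^+ (2 * i) * q ^+ 2.
Proof. by rewrite !exprM expr_ordS. Qed.

Lemma exp2q_ord_pred (i : 'I_D) : q ^+ (2 * ord_pred i) = q ^+ (2 * i) / q ^+ 2.
Proof. by rewrite !exprM expr_ord_pred. Qed.

Let qX_neq0 k : q ^+ k != 0 := expf_neq0 k q0.

(* Two passes, since the triple product in [periph_mx] nests two sums. *)
Ltac expand_entries :=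
  do 2 rewrite ?mxE ?sum_mul_rho0 ?sum_mul_rho1 ?sum_mul_rhoinf; rewrite ?mxE /lam;
  rewrite ?ordSK ?ord_predK ?(exprD q (2 * _) 1) ?expr1 ?exp2q_ordS ?exp2q_ord_pred.

Lemma rho_rel_0inf :
  q *: (rho0 q sigma D *m rhoinf s t) - q^-1 *: (rhoinf s t *m rho0 q sigma D)
  = (q ^+ 2 - q ^- 2) *: rho1 q sigma s t.
Proof.
apply/matrixP => j i; expand_entries.
by field; rewrite ?sigma0 ?q0 ?qX_neq0.
Qed.

Lemma rho_rel_10 :
  q *: (rho1 q sigma s t *m rho0 q sigma D) - q^-1 *: (rho0 q sigma D *m rho1 q sigma s t)
  = (q ^+ 2 - q ^- 2) *: rhoinf s t.
Proof.
apply/matrixP => j i; expand_entries.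
by field; rewrite ?sigma0 ?q0 ?qX_neq0.
Qed.

Hypothesis x_sqr_neq1 : forall k, (q ^+ (2 * k) * sigma) ^+ 2 != 1.

(* Stated in the normal form in which [field] produces its side conditions. *)
Lemma diag_denominators_neq0 (i : 'I_D) :
  [/\ q ^+ (2 * i) * sigma * (q ^+ (2 * i) * sigma) - 1 != 0,
      q ^+ (2 * i) * sigma * (q ^+ (2 * i) * sigma) + - q ^+ 2 * q ^+ 2 != 0 &
      q ^+ (2 * i) * q ^+ 2 * sigma * (q ^+ (2 * i) * q ^+ 2 * sigma) - 1 != 0].
Proof.
have x2 k : q ^+ (2 * k) * sigma * (q ^+ (2 * k) * sigma) - 1 != 0.
  by rewrite subr_eq0 -expr2 x_sqr_neq1.
split; [exact: x2 | | by have := x2 (ordS i); rewrite exp2q_ordS].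
apply: contraNneq (x2 (ord_pred i)) => x2q4; rewrite exp2q_ord_pred.
have -> : q ^+ (2 * i) / q ^+ 2 * sigma * (q ^+ (2 * i) / q ^+ 2 * sigma) - 1
    = (q ^+ (2 * i) * sigma * (q ^+ (2 * i) * sigma) + - q ^+ 2 * q ^+ 2) / (q ^+ 2 * q ^+ 2).
  by field; rewrite q0.
by rewrite x2q4 mul0r.
Qed.

Variable w : F.
Hypothesis hst : in_E0 q sigma w s t.

Lemma rho_rel_inf1 :
  q *: (rhoinf s t *m rho1 q sigma s t) - q^-1 *: (rho1 q sigma s t *m rhoinf s t)
  = (q ^+ 2 - q ^- 2) *: rho0 q sigma D.
Proof.
apply/matrixP => j i; expand_entries.
case: (eqVneq j i) => [->|_]; rewrite ?mulr0n ?mulr1n;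
  last by field; rewrite ?sigma0 ?q0 ?qX_neq0.
set p := ord_pred i.
(* The diagonal defect is a combination of the equations defining E^0. *)
apply/eqP; rewrite -subr_eq0; apply/eqP.
transitivity (lamh q sigma (ordS i) * (s i * t i - r_coef q sigma w i)
   - lamh q sigma p * (s p * t p - r_coef q sigma w p)); last first.
  by rewrite !hst !subrr !mulr0 subrr.
rewrite /r_coef /lamh /p ?ordSK ?ord_predK !exp4q_add2 ?exp2q_ordS ?exp2q_ord_pred.
have [n1 n2 n3] := diag_denominators_neq0 i.
by field; rewrite sigma0 q0 qX_neq0 n1 n2 n3.
Qed.

Lemma rho_periph : periph_mx q (rho0 q sigma D) (rho1 q sigma s t) (rhoinf s t) = w%:M.
Proof.
apply/matrixP => j i; rewrite /periph_mx; expand_entries.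
case: (eqVneq j i) => [->|_]; rewrite ?mulr0n ?mulr1n;
  last by field; rewrite ?sigma0 ?q0 ?qX_neq0.
set p := ord_pred i.
apply/eqP; rewrite -subr_eq0; apply/eqP.
pose x := q ^+ (2 * i) * sigma.
transitivity ((q ^+ 2 * x ^+ 2 - q ^- 2) * (s i * t i - r_coef q sigma w i)
   + (q ^+ 2 * x ^- 2 - q ^- 2) * (s p * t p - r_coef q sigma w p)); last first.
  by rewrite !hst !subrr !mulr0 addr0.
rewrite /r_coef /lamh /p /x ?ordSK ?ord_predK !exp4q_add2 ?exp2q_ordS ?exp2q_ord_pred.
have [n1 n2 n3] := diag_denominators_neq0 i.
by field; rewrite sigma0 q0 qX_neq0 n1 n2 n3.
Qed.

End RhoMatrices.

Lemma cheb_aux_diag (F : fieldType) D (y : 'I_D -> F) (y0 : forall i, y i != 0) k :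
  cheb_aux (\matrix_(j, i) ((j == i)%:R * (y i + (y i)^-1))) k =
  (\matrix_(j, i) ((j == i)%:R * (y i ^+ k + (y i ^+ k)^-1)),
   \matrix_(j, i) ((j == i)%:R * (y i ^+ k.+1 + (y i ^+ k.+1)^-1))).
Proof.
elim: k => [|k IH] /=.
  congr pair; apply/matrixP => j i; rewrite !mxE ?expr0 ?expr1 ?invr1 //.
  by case: (j == i); rewrite ?mulr1n ?mulr0n ?mul1r ?mul0r.
rewrite IH; congr pair; apply/matrixP => j i; rewrite !mxE.
under eq_bigr do rewrite !mxE.
rewrite sum_mul_delta.
case: (j == i); rewrite ?mul1r ?mul0r ?subr0 //.
have yk0 : y i ^+ k != 0 by rewrite expf_neq0.
by rewrite !exprS; field; rewrite y0 yk0.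
Qed.

Lemma chebT_rho0 (F : fieldType) (q sigma : F) D :
  (q ^+ 2) ^+ D = 1 -> q != 0 -> sigma != 0 ->
  chebT (rho0 q sigma D) D = (z0 D sigma)%:M.
Proof.
move=> qD q0 sigma0.
have -> : rho0 q sigma D = \matrix_(j, i) ((j == i)%:R *
    (q ^+ (2 * i) * sigma + (q ^+ (2 * i) * sigma)^-1)).
  by apply/matrixP => j i; rewrite !mxE /lam invfM.
rewrite /chebT cheb_aux_diag /=; last by move=> i; rewrite mulf_neq0 ?expf_neq0.
by apply/matrixP => j i; rewrite !mxE expr_q2k_sigma // mulr_natl.
Qed.

Lemma general_sigma_sqr_neq1 (F : numFieldType) D (sigma x : F) :
  general_sigma D sigma -> x ^+ D = sigma ^+ D -> x ^+ 2 != 1.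
Proof.
case=> _ hz0 xD.
have two_neqN2 : (2 : F) != -2 by rewrite -subr_eq0 opprK -natrD pnatr_eq0.
have sigmaD_neq1 : sigma ^+ D != 1.
  apply/eqP => sD; have z0_2 : z0 D sigma = 2 by rewrite /z0 sD invr1.
  case: hz0 => [[z0n2 _]|[z0N2 _]]; first by rewrite z0_2 eqxx in z0n2.
  by move: two_neqN2; rewrite -z0N2 z0_2 eqxx.
rewrite sqrf_eq1 negb_or; apply/andP; split.
  by apply: (contraNneq _ sigmaD_neq1) => x1; rewrite -xD x1 expr1n.
apply/eqP => xN1; move: xD; rewrite xN1 -signr_odd; case oddD: (odd D) => sD.
  have z0_N2 : z0 D sigma = -2 by rewrite /z0 -sD expr1 invrN1 -opprD.
  by case: hz0 => [[_]|[_]]; rewrite ?z0_N2 ?eqxx ?oddD.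
by rewrite -sD eqxx in sigmaD_neq1.
Qed.

Theorem mainTheorem5 (R : realType) (q : R[i]) (D : nat)
  (hq2 : D.-primitive_root (q ^+ 2))   (* q root of unity, D = n = ord(q^2) *)
  (hq4 : q ^+ 4 != 1)
  (sigma : R[i]) (hsigma : general_sigma D sigma)
  (w : R[i]) (s t : 'I_D -> R[i]) (hst : in_E0 q sigma w s t) :
  skein_rep q (rho0 q sigma D) (rho1 q sigma s t) (rhoinf s t)
  /\ chebT (rho0 q sigma D) D = (z0 D sigma)%:M
  /\ periph_mx q (rho0 q sigma D) (rho1 q sigma s t) (rhoinf s t) = w%:M.
Proof.
have qD : (q ^+ 2) ^+ D = 1 := prim_expr_order hq2.
have q0 : q != 0.
  have q2_0 : q ^+ 2 != 0 by rewrite (prim_root_eq0 hq2) -lt0n (prim_order_gt0 hq2).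
  by apply: contraNneq q2_0 => ->; rewrite expr0n.
have sigma0 : sigma != 0 by case: hsigma.
have x_sqr_neq1 k : (q ^+ (2 * k) * sigma) ^+ 2 != 1.
  by apply: general_sigma_sqr_neq1 hsigma _; apply: expr_q2k_sigma.
split; first split.
- exact: rho_rel_0inf.
- exact: rho_rel_10.
- exact: rho_rel_inf1 hst.
split; first exact: chebT_rho0.
exact: rho_periph hst.
Qed.
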